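(* For $r\ge 2$, let $H(r)$ be the graph on vertex set $\{1,\dots,2r+4\}$ in which $V_1=\{1,\dots,r+2\}$ and $V_2=\{r+3,\dots,2r+4\}$ each induce a complete graph, and the only edges between $V_1$ and $V_2$ are $\{i,r+2+i\}$ for $i=1,\dots,r$. Then $\operatorname{Z}(H(r))=\overline{\operatorname{Z}}(H(r))=r+2$ and $\underline{z_0}(H(r))=z_0(H(r))=2r+2=\overline{\operatorname{Z}}(H(r))+r$.
   Context: Zero forcing on a graph $G$: starting with a set $S$ of blue vertices (others white), a blue vertex $v$ may change a white vertex $w$ to blue if $w$ is the only white neighbor of $v$. $S$ is a zero forcing set if repeated application colors all of $V(G)$ blue. $\operatorname{Z}(G)$ is the minimum size of a zero forcing set, $\overline{\operatorname{Z}}(G)$ the maximum size of a minimal (under inclusion) zero forcing set. $\mathscr{Z}^{\rm TAR}(G)$ has vertices the zero forcing sets of $G$, two adjacent iff their symmetric difference has size 1; $\mathscr{Z}^{\rm TAR}_k(G)$ is its subgraph induced by zero forcing sets of size at most $k$. $\underline{z_0}(G)$ is the least $k$ with $\mathscr{Z}^{\rm TAR}_k(G)$ connected; $z_0(G)$ is the least $k$ such that $\mathscr{Z}^{\rm TAR}_i(G)$ is connected for every $i=k,\dots,|V(G)|$. *)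

From mathcomp Require Import all_boot all_order.
Set Implicit Arguments. Unset Strict Implicit. Unset Printing Implicit Defensive.

Section ZeroForcing.
Variables (T : finType) (e : rel T).

Definition nbhd (v : T) : {set T} := [set w | e v w].

Definition force_step (S S' : {set T}) : bool :=
  [exists v, exists w,
     [&& v \in S, w \notin S, e v w,
         nbhd v :\ w \subset S & S' == w |: S]].

Definition zfs (S : {set T}) : bool := connect force_step S setT.

(* Z(G): minimum size of a zero forcing set (V(G) itself is one). *)
Definition Z : nat := \big[minn/#|T|]_(S : {set T} | zfs S) #|S|.

Definition Zbar : nat := \big[maxn/0]_(S : {set T} | minset zfs S) #|S|.

Definition tar_adj (k : nat) (S S' : {set T}) : bool :=
  [&& zfs S, zfs S', #|S| <= k, #|S'| <= k &
      #|(S :\: S') :|: (S' :\: S)| == 1].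

Definition tar_vertex (k : nat) (S : {set T}) : bool := zfs S && (#|S| <= k).

Definition tar_connected (k : nat) : bool :=
  [exists S, tar_vertex k S] &&
  [forall S, forall S', (tar_vertex k S && tar_vertex k S') ==> connect (tar_adj k) S S'].

Definition z0_lower : nat :=
  \big[minn/#|T|]_(k < #|T|.+1 | tar_connected k) (k : nat).

Definition z0 : nat :=
  \big[minn/#|T|]_(k < #|T|.+1 |
     [forall i : 'I_(#|T|.+1), (k <= i) ==> tar_connected i]) (k : nat).

End ZeroForcing.

(* Vertex i : 'I_(2r+4) represents the paper's vertex i+1.
   V1 = {0,...,r+1} (paper: {1,...,r+2}), V2 = {r+2,...,2r+3}
   (paper: {r+3,...,2r+4}); each induces a clique, and the only cross edges
   are {i, r+2+i} for i = 0,...,r-1 (paper: i = 1,...,r). *)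
Definition H_adj (r : nat) : rel 'I_(2 * r + 4) :=
  fun x y =>
    (x != y) &&
    [|| ((x < r + 2) && (y < r + 2)),
        ((r + 2 <= x) && (r + 2 <= y)),
        ((x < r) && (y == x + r + 2 :> nat)) |
        ((y < r) && (x == y + r + 2 :> nat))].
Arguments H_adj r : clear implicits.

From mathcomp Require Import all_boot all_order zify.
Import Order.TTheory.
Set Implicit Arguments. Unset Strict Implicit. Unset Printing Implicit Defensive.

(* A set is zero forcing iff it meets every fort (a nonempty set F such that no
   vertex outside F has exactly one neighbour in F).  In H(r), with vertices
   0, ..., 2r+3, cliques V1 = [0, r+2) and V2 = [r+2, 2r+4), the forts B2 =
   {2r+2, 2r+3}, its mirror image A1 = {r, r+1} and the complements of sets
   missing two vertices of each clique show that a zero forcing set contains all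
   but at most one vertex of one clique and one vertex of the pair A1 or B2 lying
   in the other clique; conversely every such set is zero forcing.  These sets
   have at least r+2 elements and can be shrunk to exactly r+2, so Z = Zbar = r+2.
   A set of both kinds has at least 2r+2 elements, so for k <= 2r+1 no TAR move
   inside Z^TAR_k changes the kind and the graph is disconnected; for k >= 2r+2
   every vertex of Z^TAR_k is joined to the set of all vertices but r+1 and
   2r+3, which is of both kinds. *)

Section ZeroForcing.
Variables (T : finType) (e : rel T).

Definition fort (F : {set T}) : bool :=
  (F != set0) && [forall v, (v \notin F) ==> (#|nbhd e v :&: F| != 1)].

Lemma fort_other_nbr F v w : fort F -> v \notin F -> w \in F -> e v w ->
  exists x, [/\ x \in F, e v x & x != w].
Proof.
case/andP=> _ /forallP/(_ v) + vF wF evw; rewrite vF /=.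
have [/existsP[x /and3P[xF evx xw]]|no_x] :=
  boolP [exists x, [&& x \in F, e v x & x != w]]; first by exists x.
move=> /negP[]; apply/cards1P; exists w; apply/setP=> x; rewrite !inE.
case: (eqVneq x w) => [->|xw]; first by rewrite evw wF.
by apply: contraNF no_x => /andP[evx xF]; apply/existsP; exists x; rewrite xF evx xw.
Qed.

Lemma fort_intro F : F != set0 ->
  (forall v, v \notin F -> (forall x, e v x -> x \notin F) \/
     exists x y, [/\ e v x, e v y, x \in F, y \in F & x != y]) -> fort F.
Proof.
move=> F0 hF; apply/andP; split => //; apply/forallP => v; apply/implyP => vF.
apply/negP => /cards1P [z vFz].
have inz x : e v x -> x \in F -> x = z.
  by move=> evx xF; apply/set1P; rewrite -vFz !inE evx xF.
case: (hF v vF) => [none|[x [y [evx evy xF yF]]]].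
  have: z \in nbhd e v :&: F by rewrite vFz set11.
  by rewrite !inE => /andP[/none/negP].
by rewrite (inz x evx xF) (inz y evy yF) eqxx.
Qed.

Lemma force_step_card X Y : force_step e X Y -> #|Y| = #|X|.+1.
Proof.
by case/existsP=> v /existsP[w /and5P[_ wX _ _ /eqP->]]; rewrite cardsU1 wX.
Qed.

Lemma force_step_subset X Y : force_step e X Y -> X \subset Y.
Proof. by case/existsP=> v /existsP[w /and5P[_ _ _ _ /eqP->]]; apply: subsetUr. Qed.

Lemma connect_force_subset X Y : connect (force_step e) X Y -> X \subset Y.
Proof.
case/connectP=> p; elim: p X => [|Z p IHp] X /=; first by move=> _ ->.
by case/andP=> /force_step_subset XZ /IHp ZY /ZY; apply: subset_trans.
Qed.

Lemma force_step_fort F X Y : fort F -> force_step e X Y ->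
  X :&: F = set0 -> Y :&: F = set0.
Proof.
move=> fF /existsP[v /existsP[w /and5P[vX wX evw vXw /eqP->]]] XF0.
have outF x : x \in X -> x \notin F.
  move=> xX; apply/negP=> xF; have: x \in X :&: F by rewrite inE xX xF.
  by rewrite XF0 inE.
have [wF|wF] := boolP (w \in F).
  have [x [xF evx xw]] := fort_other_nbr fF (outF v vX) wF evw.
  have xX : x \in X by apply: (subsetP vXw); rewrite !inE xw evx.
  by move: (outF x xX); rewrite xF.
rewrite setIUl XF0 setU0; apply/setP=> x; rewrite !inE.
by case: eqP => // ->; rewrite (negbTE wF).
Qed.

Lemma stalled_complement_fort C : C != setT ->
  (forall Y, ~~ force_step e C Y) -> fort (~: C).
Proof.
move=> CT stalled; apply/andP; split.
  by apply: contra CT => /eqP C0; rewrite -[C]setCK C0 setC0.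
apply/forallP=> v; apply/implyP; rewrite inE negbK => vC.
apply/negP=> /cards1P[w vCw].
have: w \in nbhd e v :&: ~: C by rewrite vCw set11.
rewrite !inE => /andP[evw wC].
apply: (negP (stalled (w |: C))); apply/existsP; exists v; apply/existsP; exists w.
rewrite vC wC evw eqxx andbT /=; apply/subsetP => x; rewrite !inE => /andP[xw evx].
by apply: contraTT xw => xC; rewrite negbK -in_set1 -vCw !inE evx.
Qed.

Lemma zfs_fortsP S : reflect (forall F, fort F -> S :&: F != set0) (zfs e S).
Proof.
apply: (iffP idP) => [zS F fF|meets].
  apply/negP=> /eqP SF; case/andP: (fF) => /negP F0 _; apply: F0.
  case/connectP: zS SF => p; elim: p S => [|Y p IHp] X /=.
    by move=> _ <- /eqP; rewrite setTI.
  by case/andP=> /(force_step_fort fF) XY /IHp YF lastT /XY; apply: YF.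
have [C SC Cmax] :=
  @arg_maxnP _ S (connect (force_step e) S) (fun X => #|X|) (connect0 _ _).
have [CT|CT] := eqVneq C setT; first by rewrite /zfs -CT.
have stalled Y : ~~ force_step e C Y.
  apply/negP=> CY; have := Cmax Y (connect_trans SC (connect1 CY)).
  rewrite (force_step_card CY); lia.
have /set0Pn[x] := meets _ (stalled_complement_fort CT stalled).
by rewrite !inE => /andP[/(subsetP (connect_force_subset SC)) ->].
Qed.

Lemma zfsS (S S' : {set T}) : S \subset S' -> zfs e S -> zfs e S'.
Proof.
move=> SS' /zfs_fortsP meets; apply/zfs_fortsP => F /meets.
by apply: contraNN => /eqP SF; rewrite -subset0 -SF setSI.
Qed.

Section Automorphism.
Variables (f g : T -> T).
Hypotheses (fK : cancel f g) (gK : cancel g f).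
Hypothesis f_adj : forall x y, e (f x) (f y) = e x y.

Lemma force_step_preimset X Y :
  force_step e X Y -> force_step e (f @^-1: X) (f @^-1: Y).
Proof.
case/existsP=> v /existsP[w /and5P[vX wX evw vXw /eqP->]].
apply/existsP; exists (g v); apply/existsP; exists (g w).
rewrite !inE !gK vX wX -f_adj !gK evw /=; apply/andP; split.
  apply/subsetP=> x; rewrite !inE => /andP[xw evx]; apply: (subsetP vXw).
  by rewrite !inE (can2_eq fK gK) xw -[v]gK f_adj.
by apply/eqP/setP=> x; rewrite !inE (can2_eq fK gK).
Qed.

Lemma zfs_preimset S : zfs e S -> zfs e (f @^-1: S).
Proof.
rewrite /zfs -{2}(preimsetT f); case/connectP=> p; elim: p S => [|Y p IHp] X /=.
  by move=> _ ->.
by case/andP=> /force_step_preimset XY /IHp YT /YT; apply: connect_trans (connect1 XY).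
Qed.
End Automorphism.

Lemma card_symdiff1_subset (X Y : {set T}) :
  #|(X :\: Y) :|: (Y :\: X)| == 1 -> X \subset Y \/ Y \subset X.
Proof.
case/cards1P=> z XYz.
have only_z u : u \in (X :\: Y) :|: (Y :\: X) -> u = z by rewrite XYz => /set1P.
have [zX|zX] := boolP (z \in X); [right|left]; apply/subsetP=> u uin;
  by apply: contraTT zX => uout; rewrite -(only_z u) ?negbK // !inE uin uout ?orbT.
Qed.

Lemma tar_adj_sym k : symmetric (tar_adj e k).
Proof.
move=> X Y; rewrite /tar_adj setUC.
by case: (zfs e X); case: (zfs e Y); case: (#|X| <= k); case: (#|Y| <= k).
Qed.

Lemma tar_connect_superset k (X Y : {set T}) : zfs e X -> X \subset Y -> #|Y| <= k ->
  connect (tar_adj e k) X Y.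
Proof.
move=> + + Yk; move: {2}#|Y :\: X| (erefl #|Y :\: X|) => n.
elim: n X => [|n IHn] X dYX zX XY.
  by rewrite (eqP (_ : X == Y)) // eqEsubset XY -setD_eq0 -cards_eq0 dYX.
have /card_gt0P[y] : 0 < #|Y :\: X| by rewrite dYX.
rewrite inE => /andP[yX yY].
have XyY : y |: X \subset Y by rewrite subUset sub1set yY XY.
have zXy : zfs e (y |: X) by apply: zfsS zX; apply: subsetUr.
apply: connect_trans (IHn _ _ zXy XyY).
  apply: connect1; rewrite /tar_adj zX zXy !(leq_trans (subset_leq_card _) Yk) //=.
  rewrite (_ : _ :|: _ = [set y]) ?cards1 //; apply/setP=> z; rewrite !inE.
  by case: eqP => [->|]; rewrite ?(negbTE yX) //=; case: (z \in X).
apply/eqP; rewrite -eqSS -dYX (cardsD1 y (Y :\: X)) inE yX yY.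
by rewrite eqSS; apply/eqP/eq_card => z; rewrite !inE negb_or andbA.
Qed.

Lemma tar_connect_union k (X Y : {set T}) : zfs e X -> zfs e Y -> #|X :|: Y| <= k ->
  connect (tar_adj e k) X Y.
Proof.
move=> zX zY XYk; apply: connect_trans (tar_connect_superset zX (subsetUl X Y) XYk) _.
by rewrite (sym_connect_sym (@tar_adj_sym k)) tar_connect_superset ?subsetUr.
Qed.

Lemma Z_eq m : (exists2 S, zfs e S & #|S| = m) ->
  (forall S, zfs e S -> m <= #|S|) -> Z e = m.
Proof.
case=> S zS <- Smin; apply/anti_leq/andP; split.
  exact: (@bigmin_le_cond _ nat _ _ S _ _ zS).
by apply: (big_ind (leq #|S|)) => [|a b|A /Smin] //; [apply: max_card | rewrite leq_min => ->].
Qed.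

Lemma Zbar_eq m : (exists2 S, minset (zfs e) S & #|S| = m) ->
  (forall S, minset (zfs e) S -> #|S| <= m) -> Zbar e = m.
Proof.
case=> S minS <- Smax; apply/anti_leq/andP; split; last by rewrite /Zbar (bigD1 S) ?leq_maxl.
by apply: (big_ind (leq^~ #|S|)) => [|a b|A /Smax] //; rewrite geq_max => ->.
Qed.
End ZeroForcing.

Lemma bigmin_threshold n m (P : pred 'I_n.+1) : m <= n ->
  (forall k : 'I_n.+1, P k = (m <= k)) ->
  \big[minn/n]_(k < n.+1 | P k) (k : nat) = m.
Proof.
move=> mn Pm; have m_lt : m < n.+1 by [].
apply/anti_leq/andP; split.
  by rewrite -[m]/(Ordinal m_lt : nat); apply: (@bigmin_le_cond _ nat); rewrite Pm.
by apply: (big_ind (leq m)) => [|a b|k] //; [rewrite leq_min => -> | rewrite Pm].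
Qed.

Section Threshold.
Variables (T : finType) (e : rel T) (m : nat).
Hypotheses (m_le : m <= #|T|) (connectedE : forall k, tar_connected e k = (m <= k)).

Lemma z0_lower_eq : z0_lower e = m.
Proof. by apply: bigmin_threshold => // k; rewrite connectedE. Qed.

Lemma z0_eq : z0 e = m.
Proof.
apply: bigmin_threshold => // k; apply/forallP/idP => [/(_ k)|mk i].
  by rewrite leqnn connectedE.
by rewrite connectedE; apply/implyP/leq_trans.
Qed.
End Threshold.

Lemma card_set_nat n (P : pred nat) : #|[set x : 'I_n | P x]| = count P (iota 0 n).
Proof.
rewrite cardsE cardE /enum_mem size_filter -val_enum_ord count_map -enumT.
exact: eq_count.
Qed.

Lemma count_iota_rec (P : pred nat) (c : nat -> nat) n :
  c 0 = 0 -> (forall i, c i.+1 = c i + P i) -> count P (iota 0 n) = c n.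
Proof.
move=> c0 cS; elim: n => [|n IHn] //.
by rewrite -addn1 iotaD count_cat /= IHn addn1 cS addn0.
Qed.

Section H.
Variable r : nat.
Hypothesis r_ge2 : 2 <= r.
Local Notation T := 'I_(2 * r + 4).
Local Notation e := (H_adj r).

Lemma H_adjE (x y : T) : e x y =
  ((x : nat) != y) &&
  [|| (x < r + 2) && (y < r + 2), (r + 2 <= x) && (r + 2 <= y),
      (x < r) && (y == x + r + 2 :> nat) | (y < r) && (x == y + r + 2 :> nat)].
Proof. by []. Qed.

Lemma swap_subproof (x : T) : (if x < r + 2 then x + (r + 2) else x - (r + 2)) < 2 * r + 4.
Proof. by have := ltn_ord x; case: ifP; lia. Qed.

Definition swap (x : T) : T := Ordinal (swap_subproof x).

Lemma swapK : involutive swap.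
Proof. by move=> x; apply: val_inj => /=; have := ltn_ord x; do 2 case: ifP; lia. Qed.

Lemma swap_adj x y : e (swap x) (swap y) = e x y.
Proof.
rewrite !H_adjE /=; move: (ltn_ord x) (ltn_ord y) => x_lt y_lt.
by do 2 case: ifP => ?; apply/idP/idP; lia.
Qed.

Lemma exists_vertex k : k < 2 * r + 4 -> exists v : T, (v : nat) = k.
Proof. by move=> k_lt; exists (Ordinal k_lt). Qed.

Lemma val_neq (A : {set T}) (x y : T) : x \in A -> y \notin A -> (x : nat) != y.
Proof. by move=> xA; apply: contraNneq => /val_inj <-. Qed.

Definition ivl lo hi : {set T} := [set x : T | lo <= x < hi].

Lemma card_ivl lo hi : lo <= hi -> hi <= 2 * r + 4 -> #|ivl lo hi| = hi - lo.
Proof.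
move=> lo_hi hi_le; rewrite (@card_set_nat _ (fun x => lo <= x < hi)).
by rewrite (@count_iota_rec _ (fun m => minn hi m - lo)) ?minn0 ?(minn_idPl hi_le) // => i; lia.
Qed.

Lemma ivl_subset_card lo hi (A : {set T}) : lo <= hi -> hi <= 2 * r + 4 ->
  (forall x : T, lo <= x < hi -> x \in A) -> hi - lo <= #|A|.
Proof.
move=> lo_hi hi_le sub; rewrite -card_ivl //; apply/subset_leq_card/subsetP => x.
by rewrite inE => /sub.
Qed.

Definition V1 := ivl 0 (r + 2).
Definition V2 := ivl (r + 2) (2 * r + 4).
Definition A1 := ivl r (r + 2).
Definition B2 := ivl (2 * r + 2) (2 * r + 4).

Lemma card_V1 : #|V1| = r + 2.
Proof. by rewrite card_ivl //; lia. Qed.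

Lemma card_V2 : #|V2| = r + 2.
Proof. by rewrite card_ivl //; lia. Qed.

Lemma preim_swap_V2 : swap @^-1: V2 = V1.
Proof. by apply/setP=> x; rewrite !inE /=; have := ltn_ord x; case: ifP; lia. Qed.

Lemma preim_swap_A1 : swap @^-1: A1 = B2.
Proof. by apply/setP=> x; rewrite !inE /=; have := ltn_ord x; case: ifP; lia. Qed.

(* [typ V B S]: S misses at most one vertex of the clique V and meets the pair B
   of vertices of the other clique that have no neighbour in V. *)
Definition typ (V B S : {set T}) := (r + 1 <= #|S :&: V|) && (S :&: B != set0).
Definition type1 := typ V1 B2.
Definition type2 := typ V2 A1.

Lemma type2E S : type2 S = type1 (swap @^-1: S).
Proof.
have swap_inj : injective swap := inv_inj swapK.
by rewrite /type2 /type1 /typ -preim_swap_V2 -preim_swap_A1 -!preimsetI -!cards_eq0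
  !card_preimset.
Qed.

Lemma typ_outside_eq (V B S : {set T}) x y : #|V| = r + 2 -> typ V B S ->
  x \in V :\: S -> y \in V :\: S -> x = y.
Proof.
move=> card_V /andP[SV _] xVS yVS; have := cardsID S V; rewrite card_V setIC => cardVS.
have /card_le1_eqP VS_eq : #|V :\: S| <= 1 by lia.
exact: VS_eq.
Qed.

Section Typ.
Variables (V B : {set T}).
Hypothesis BV : [disjoint B & V].

Lemma typS (S S' : {set T}) : S \subset S' -> typ V B S -> typ V B S'.
Proof.
move=> SS' /andP[SV /set0Pn[b]]; rewrite inE => /andP[bS bB].
rewrite /typ (leq_trans SV) ?subset_leq_card ?setSI //.
by apply/set0Pn; exists b; rewrite inE bB (subsetP SS').
Qed.

Lemma typ_card S : typ V B S -> r + 2 <= #|S|.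
Proof.
case/andP=> SV /set0Pn[b]; rewrite inE => /andP[bS bB].
suff /proper_card : S :&: V \proper S by lia.
rewrite properEneq subsetIl andbT; apply: contraTneq bS => SVS.
by rewrite -SVS inE (disjointFr BV bB) andbF.
Qed.

Lemma typ_shrink S : typ V B S -> r + 3 <= #|S| ->
  exists2 v, v \in S & typ V B (S :\ v).
Proof.
move=> /andP[SV /set0Pn[b]]; rewrite inE => /andP[bS bB] S_big.
have bV := disjointFr BV bB.
have [SV_big|SV_small] := leqP (r + 2) #|S :&: V|.
  have /card_gt0P[v vSV] : 0 < #|S :&: V| by lia.
  move: (vSV); rewrite inE => /andP[vS vV]; exists v => //; apply/andP; split.
    by rewrite setIDAC; have := cardsD1 v (S :&: V); rewrite vSV; lia.
  apply/set0Pn; exists b; rewrite !inE bS bB !andbT.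
  by apply: contraFneq bV => ->.
have /card_gt1P[x [y [xSV ySV xy]]] : 1 < #|S :\: V| by have := cardsID V S; lia.
move: xSV ySV; rewrite !inE => /andP[xV xS] /andP[yV yS].
exists (if x \in B then y else x); first by case: ifP.
apply/andP; split.
  apply: leq_trans SV _; apply/subset_leq_card/subsetP => z; rewrite !inE.
  case/andP=> zS zV; rewrite zS zV !andbT.
  by case: ifP => _; apply: contraTneq zV => ->.
apply/set0Pn; exists (if x \in B then x else b); rewrite !inE.
case xB: (x \in B); first by rewrite xS xy xB.
by rewrite bS bB !andbT; apply: contraFneq xB => <-.
Qed.
End Typ.

Lemma outside_pair (V S : {set T}) : #|V| = r + 2 -> #|S :&: V| <= r ->
  exists x y, [/\ x \in V :\: S, y \in V :\: S & x != y].
Proof. by move=> card_V SV; apply/card_gt1P; have := cardsID S V; rewrite setIC; lia. Qed.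

Lemma disjoint_B2_V1 : [disjoint B2 & V1].
Proof. by rewrite disjoint_subset; apply/subsetP=> x; rewrite !inE; lia. Qed.

Lemma disjoint_A1_V2 : [disjoint A1 & V2].
Proof. by rewrite disjoint_subset; apply/subsetP=> x; rewrite !inE; lia. Qed.

Lemma type1_type2_card S : type1 S -> type2 S -> 2 * r + 2 <= #|S|.
Proof.
case/andP=> SV1 _ /andP[SV2 _]; have := cardsID V1 S.
suff : #|S :&: V2| <= #|S :\: V1| by lia.
by apply/subset_leq_card/subsetP=> x; rewrite !inE => /andP[-> ?]; rewrite andbT; lia.
Qed.

Lemma adj_same_half (x y : T) : x != y -> (x < r + 2) = (y < r + 2) -> e x y.
Proof. by rewrite H_adjE -val_eqE /= => -> /=; have := ltn_ord x; have := ltn_ord y; lia. Qed.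

Section Type1Fort.
Variables (S F : {set T}).
Hypotheses (tS : type1 S) (fF : fort e F) (SF0 : S :&: F = set0).

Lemma fort_outside x : x \in F -> x \notin S.
Proof.
move=> xF; apply/negP=> xS; have: x \in S :&: F by rewrite inE xS xF.
by rewrite SF0 inE.
Qed.

Lemma type1_fort_notin_V1 w : w \in F -> r + 2 <= w.
Proof.
move=> wF; rewrite leqNgt; apply/negP=> w_lt.
(* A vertex a of A1 other than w has all its neighbours in V1, where w is the
   only vertex outside S. *)
have [a a_val] := @exists_vertex (if (w : nat) == r then r + 1 else r) ltac:(case: ifP; lia).
have wV1 : w \in V1 :\: S by rewrite !inE fort_outside //=.
have eaw : e a w by rewrite H_adjE a_val; case: ifP; lia.
have aF : a \notin F.
  apply/negP=> /fort_outside aS.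
  have aV1 : a \in V1 :\: S by rewrite !inE aS a_val; case: ifP; lia.
  by move: eaw; rewrite (typ_outside_eq card_V1 tS aV1 wV1) H_adjE eqxx.
have [x [xF eax xw]] := fort_other_nbr fF aF wF eaw.
have xV1 : x \in V1 :\: S.
  by rewrite !inE fort_outside //=; move: eax; rewrite H_adjE a_val; case: ifP; lia.
by rewrite (typ_outside_eq card_V1 tS xV1 wV1) eqxx in xw.
Qed.

Lemma type1_fort_sub_B2 w : w \in F -> 2 * r + 2 <= w.
Proof.
move=> wF; rewrite leqNgt; apply/negP=> w_lt; have w_ge := type1_fort_notin_V1 wF.
(* The neighbour y of w in V1 has no other neighbour outside V1. *)
have [y y_val] := @exists_vertex (w - (r + 2)) ltac:(lia).
have yF : y \notin F by apply/negP=> /type1_fort_notin_V1; lia.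
have eyw : e y w by rewrite H_adjE y_val; lia.
have [z [zF eyz zw]] := fort_other_nbr fF yF wF eyw.
have := type1_fort_notin_V1 zF.
by move: eyz zw; rewrite H_adjE y_val -val_eqE /=; lia.
Qed.

Lemma type1_fort_absurd : False.
Proof.
case/andP: (tS) => _ /set0Pn[b]; rewrite !inE => /andP[bS b_ge].
case/andP: (fF) => /set0Pn[f fF'] _.
have bF : b \notin F by apply: contraL bS => /fort_outside.
have ebf : e b f.
  apply: adj_same_half; first by apply: contraNneq bF => ->.
  by have := type1_fort_sub_B2 fF'; have := ltn_ord f; lia.
have [z [zF ebz zf]] := fort_other_nbr fF bF fF' ebf.
(* b, f and z would be three distinct vertices of B2. *)
have := type1_fort_sub_B2 zF; have := type1_fort_sub_B2 fF'.
have := val_neq zF bF; have := val_neq fF' bF; have := ltn_ord z; have := ltn_ord f.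
by move: zf; rewrite -val_eqE /=; lia.
Qed.
End Type1Fort.

Lemma type1_zfs S : type1 S -> zfs e S.
Proof.
move=> tS; apply/zfs_fortsP=> F fF; apply/negP=> /eqP SF0.
exact: type1_fort_absurd tS fF SF0.
Qed.

Lemma preim_swapK (S : {set T}) : swap @^-1: (swap @^-1: S) = S.
Proof. by apply/setP=> x; rewrite !inE swapK. Qed.

Lemma type2_zfs S : type2 S -> zfs e S.
Proof.
rewrite type2E => /type1_zfs/(zfs_preimset swapK swapK swap_adj).
by rewrite preim_swapK.
Qed.

Lemma fort_B2 : fort e B2.
Proof.
have [b2 b2_val] := @exists_vertex (2 * r + 2) ltac:(lia).
have [b3 b3_val] := @exists_vertex (2 * r + 3) ltac:(lia).
apply: fort_intro => [|v]; first by apply/set0Pn; exists b2; rewrite inE b2_val; lia.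
rewrite inE => vB2; have [v_ge|v_lt] := leqP (r + 2) v.
  right; exists b2, b3; rewrite !inE !H_adjE -val_eqE b2_val b3_val /=.
  by have := ltn_ord v; move: vB2; split; lia.
by left=> x; rewrite H_adjE inE; lia.
Qed.

Lemma fort_setC S : #|S :&: V1| <= r -> #|S :&: V2| <= r -> fort e (~: S).
Proof.
move=> SV1 SV2; have [x1 [y1 [x1V1 y1V1 xy1]]] := outside_pair card_V1 SV1.
have [x2 [y2 [x2V2 y2V2 xy2]]] := outside_pair card_V2 SV2.
apply: fort_intro => [|v].
  by apply/set0Pn; exists x1; move: x1V1; rewrite !inE => /andP[].
rewrite inE negbK => vS; right.
have nbr x : x \notin S -> (x < r + 2) = (v < r + 2) -> e v x.
  by move=> xS half; apply: adj_same_half; [apply: contraNneq xS => <- | rewrite half].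
have [v_lt|v_ge] := ltnP v (r + 2).
  exists x1, y1; move: x1V1 y1V1; rewrite !inE => /and3P[x1S _ x1_lt] /and3P[y1S _ y1_lt].
  by rewrite !nbr ?x1_lt ?y1_lt ?v_lt.
exists x2, y2; move: x2V2 y2V2; rewrite !inE => /and3P[x2S x2_ge _] /and3P[y2S y2_ge _].
by rewrite !nbr // !ltnNge ?x2_ge ?y2_ge ?v_ge.
Qed.

Lemma zfsE S : zfs e S = type1 S || type2 S.
Proof.
apply/idP/idP => [zS|/orP[/type1_zfs|/type2_zfs] //].
have SB2 := zfs_fortsP _ _ zS _ fort_B2.
have SA1 : S :&: A1 != set0.
  have := zfs_fortsP _ _ (zfs_preimset swapK swapK swap_adj zS) _ fort_B2.
  by rewrite -preim_swap_A1 -preimsetI -!cards_eq0 card_preimset //; apply: inv_inj swapK.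
rewrite /type1 /type2 /typ SB2 SA1 !andbT.
apply: contraT; rewrite negb_or -!ltnNge !addn1.
case/andP=> SV1 SV2; have := zfs_fortsP _ _ zS _ (fort_setC SV1 SV2).
by rewrite setICr eqxx.
Qed.

Lemma zfs_card S : zfs e S -> r + 2 <= #|S|.
Proof.
by rewrite zfsE => /orP[/(typ_card disjoint_B2_V1) | /(typ_card disjoint_A1_V2)].
Qed.

Definition C1 : {set T} := [set x : T | (x <= r) || (x == 2 * r + 2 :> nat)].
Definition C2 : {set T} := [set x : T | (x == r :> nat) || (r + 2 <= x <= 2 * r + 2)].
Definition W : {set T} := [set x : T | (x != r + 1 :> nat) && (x != 2 * r + 3 :> nat)].

Lemma card_C1 : #|C1| = r + 2.
Proof.
rewrite (@card_set_nat _ (fun x => (x <= r) || (x == 2 * r + 2)))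
  (@count_iota_rec _ (fun m => minn m (r + 1) + (2 * r + 2 < m))) => [|//|i]; lia.
Qed.

Lemma card_C2 : #|C2| = r + 2.
Proof.
rewrite (@card_set_nat _ (fun x => (x == r) || (r + 2 <= x <= 2 * r + 2)))
  (@count_iota_rec _ (fun m => (r < m) + (minn m (2 * r + 3) - (r + 2)))) => [|//|i]; lia.
Qed.

Lemma card_W : #|W| = 2 * r + 2.
Proof.
rewrite (@card_set_nat _ (fun x => (x != r + 1) && (x != 2 * r + 3)))
  (@count_iota_rec _ (fun m => m - (r + 1 < m) - (2 * r + 3 < m))) => [|//|i]; lia.
Qed.

Lemma card_A1 : #|A1| = 2.
Proof. by rewrite card_ivl //; lia. Qed.

Lemma card_B2 : #|B2| = 2.
Proof. by rewrite card_ivl //; lia. Qed.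

Lemma type1_C1 : type1 C1.
Proof.
apply/andP; split.
  by rewrite -[r + 1]subn0; apply: ivl_subset_card => [||x]; rewrite ?inE; lia.
have [b b_val] := @exists_vertex (2 * r + 2) ltac:(lia).
by apply/set0Pn; exists b; rewrite !inE b_val; lia.
Qed.

Lemma type2_C2 : type2 C2.
Proof.
apply/andP; split.
  have -> : r + 1 = 2 * r + 3 - (r + 2) by lia.
  by apply: ivl_subset_card => [||x]; rewrite ?inE; lia.
have [a a_val] := @exists_vertex r ltac:(lia).
by apply/set0Pn; exists a; rewrite !inE a_val; lia.
Qed.

Lemma type1_W : type1 W.
Proof.
apply/andP; split.
  by rewrite -[r + 1]subn0; apply: ivl_subset_card => [||x]; rewrite ?inE; lia.
have [b b_val] := @exists_vertex (2 * r + 2) ltac:(lia).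
by apply/set0Pn; exists b; rewrite !inE b_val; lia.
Qed.

Lemma tar_connect_typ (V B C : {set T}) k S :
  #|V| + #|B| <= k -> #|W| <= k -> C \subset V :|: B -> C \subset W ->
  (forall X, typ V B X -> zfs e X) -> typ V B C -> typ V B S -> #|S| <= k ->
  connect (tar_adj e k) S W.
Proof.
move=> VBk Wk CU CW typ_zfs tC tS Sk; set U := V :|: B.
have Uk : #|U| <= k := leq_trans (leq_card_setU V B) VBk.
have tSU : typ V B (S :&: U).
  by rewrite /typ -!setIA (setIidPr (subsetUl V B)) (setIidPr (subsetUr V B)).
apply: (connect_trans (y := S :&: U)).
  by rewrite (sym_connect_sym (@tar_adj_sym _ e k)) tar_connect_superset ?typ_zfs ?subsetIl.
apply: connect_trans (tar_connect_superset (typ_zfs _ tC) CW Wk).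
apply: tar_connect_union; rewrite ?typ_zfs //; apply: leq_trans Uk.
by apply/subset_leq_card; rewrite subUset CU subIset // subxx orbT.
Qed.

Lemma tar_connected_ge k : 2 * r + 2 <= k -> tar_connected e k.
Proof.
move=> k_ge; have zW := type1_zfs type1_W.
have toW S : tar_vertex e k S -> connect (tar_adj e k) S W.
  case/andP; rewrite zfsE => /orP[] tS Sk.
    apply: (tar_connect_typ (C := C1)) type1_zfs type1_C1 tS Sk;
      rewrite ?card_V1 ?card_B2 ?card_W //; try lia;
      by apply/subsetP=> x; rewrite !inE; lia.
  apply: (tar_connect_typ (C := C2)) type2_zfs type2_C2 tS Sk;
    rewrite ?card_V2 ?card_A1 ?card_W //; try lia;
    by apply/subsetP=> x; rewrite !inE; lia.
apply/andP; split; first by apply/existsP; exists W; rewrite /tar_vertex zW card_W.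
apply/forallP=> S; apply/forallP=> S'; apply/implyP=> /andP[/toW SW /toW S'W].
by apply: connect_trans SW _; rewrite (sym_connect_sym (@tar_adj_sym _ e k)).
Qed.

Lemma type1_tar_closed k : k <= 2 * r + 1 -> closed (tar_adj e k) [pred X | type1 X].
Proof.
move=> k_le; apply: intro_closed; first exact/sym_connect_sym/tar_adj_sym.
move=> X Y /and5P[_ zY Xk _ /card_symdiff1_subset[XY|YX]] tX; first exact: typS XY tX.
move: zY; rewrite zfsE => /orP[//|tY].
by exfalso; have := leq_trans (type1_type2_card tX (typS YX tY)) Xk; lia.
Qed.

Lemma tar_connected_lt k : k <= 2 * r + 1 -> ~~ tar_connected e k.
Proof.
move=> k_le; apply/negP.
case/andP=> /existsP[S /andP[zS Sk]] /forallP/(_ C1)/forallP/(_ C2).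
have C_k : r + 2 <= k := leq_trans (zfs_card zS) Sk.
rewrite /tar_vertex (type1_zfs type1_C1) (type2_zfs type2_C2) card_C1 card_C2 C_k /=.
move=> /(closed_connect (type1_tar_closed k_le)).
rewrite !inE type1_C1 => /esym tC2.
by have := type1_type2_card tC2 type2_C2; rewrite card_C2; lia.
Qed.

Lemma tar_connectedE k : tar_connected e k = (2 * r + 2 <= k).
Proof.
by case: leqP => [/tar_connected_ge|k_lt]; last apply/negbTE/tar_connected_lt; lia.
Qed.

Lemma minset_C1 : minset (zfs e) C1.
Proof.
apply/minsetP; split=> [|S zS SC1]; first exact: type1_zfs type1_C1.
by apply/eqP; rewrite eqEcard SC1 card_C1 zfs_card.
Qed.

Lemma minset_zfs_card S : minset (zfs e) S -> #|S| <= r + 2.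
Proof.
case/minsetP=> zS Smin; rewrite leqNgt; apply/negP; rewrite -addn1 -addnA => S_big.
have [v vS zSv] : exists2 v, v \in S & zfs e (S :\ v).
  move: zS; rewrite zfsE => /orP[tS|tS].
    by have [v vS /type1_zfs] := typ_shrink disjoint_B2_V1 tS S_big; exists v.
  by have [v vS /type2_zfs] := typ_shrink disjoint_A1_V2 tS S_big; exists v.
by have := Smin _ zSv (subsetDl S [set v]) => /setP/(_ v); rewrite !inE eqxx vS.
Qed.

Lemma Z_H : Z e = r + 2.
Proof.
apply: Z_eq; last exact: zfs_card.
by exists C1; [exact: type1_zfs type1_C1 | exact: card_C1].
Qed.

Lemma Zbar_H : Zbar e = r + 2.
Proof. by apply: Zbar_eq minset_zfs_card; exists C1; [exact: minset_C1 | exact: card_C1]. Qed.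

Lemma threshold_le_card : 2 * r + 2 <= #|T|.
Proof. by rewrite card_ord; lia. Qed.

Lemma z0_lower_H : z0_lower e = 2 * r + 2.
Proof. exact: z0_lower_eq threshold_le_card tar_connectedE. Qed.

Lemma z0_H : z0 e = 2 * r + 2.
Proof. exact: z0_eq threshold_le_card tar_connectedE. Qed.
End H.

Theorem proposition3p4 (r : nat) : 2 <= r ->
  [/\ Z (H_adj r) = r + 2,
      Zbar (H_adj r) = r + 2,
      z0_lower (H_adj r) = 2 * r + 2,
      z0 (H_adj r) = 2 * r + 2 &
      2 * r + 2 = Zbar (H_adj r) + r].
Proof.
move=> r_ge2; split; [exact: Z_H | exact: Zbar_H | exact: z0_lower_H | exact: z0_H |].
by rewrite Zbar_H //; lia.
Qed.
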